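(* For all $n\ge 3$, $|F_n(321,1324)|=\frac{3}{2}n^2-\frac{13}{2}n+10$.
   Context: A permutation $\pi$ avoids a classical pattern $p\in S_k$ if no subsequence of $\pi$ of length $k$ is order-isomorphic to $p$. A Fishburn permutation is a permutation $\pi=\pi_1\cdots\pi_n$ of $[n]$ for which there are no indices $i<j$ with $\pi_j<\pi_i<\pi_{i+1}$ and $\pi_i=\pi_j+1$. $F_n(\sigma_1,\dots,\sigma_k)$ denotes the set of Fishburn permutations of length $n$ avoiding each of the classical patterns $\sigma_1,\dots,\sigma_k$. *)

(* Permutations of [n] are represented by 'S_n (permutations
   of 'I_n = {0,..,n-1}); the one-line notation is pi_1 ... pi_n with
   pi_(i+1) = val (s i) + 1.  Shifting all values/indices by one does not
   affect pattern containment or the Fishburn condition. *)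
From mathcomp Require Import all_boot all_order all_algebra all_fingroup.
Set Implicit Arguments. Unset Strict Implicit. Unset Printing Implicit Defensive.

Definition oneline n (s : 'S_n) : seq nat := [seq val (s i) | i <- enum 'I_n].

Definition contains_pat n (s : 'S_n) (p : seq nat) : bool :=
  [exists f : {ffun 'I_(size p) -> 'I_n},
     [forall a : 'I_(size p), forall b : 'I_(size p),
        ((a < b) ==> (f a < f b)) &&
        ((s (f a) < s (f b)) == (nth 0 p a < nth 0 p b))]].

Definition avoids_pat n (s : 'S_n) (p : seq nat) : bool := ~~ contains_pat s p.

Definition fishburn n (s : 'S_n) : bool :=
  let w := oneline s in
  [forall i : 'I_n, forall j : 'I_n,
     ~~ [&& i < j, i.+1 < n, nth 0 w j < nth 0 w i,
            nth 0 w i < nth 0 w i.+1 & nth 0 w i == (nth 0 w j).+1]].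

Definition Fish n (pats : seq (seq nat)) : {set 'S_n} :=
  [set s : 'S_n | fishburn s && all (avoids_pat s) pats].

From mathcomp Require Import all_boot all_order all_algebra all_fingroup.
From mathcomp Require Import zify lra.
Set Implicit Arguments. Unset Strict Implicit. Unset Printing Implicit Defensive.
Set Bullet Behavior "Strict Subproofs".

(* A permutation is handled through its 0-based one-line word w : nat -> nat
   on positions [0, n).  The heart of the proof is a classification: a
   permutation word lies in F_n(321,1324) iff it is one of
     (I)   g1 n k    = 0 1 .. k-1 (n-1) k .. n-2                 (k < n),
     (II)  g2 n a k  = a, then [0,n-2] \ {a} increasing, with n-1
                       inserted at position k          (1 <= a <= n-2, 2 <= k < n),
     (III) g3 n a k  = a 0 1 .. k-1 (a+1) .. (n-1) k .. a-1
                                                   (2 <= a <= n-3, 1 <= k < a).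
   Hence |F_n(321,1324)| = n + (n-2)^2 + (n-3)(n-4)/2. *)

Definition perm_word n (w : nat -> nat) : Prop :=
  (forall i, i < n -> w i < n) /\ (forall i j, i < n -> j < n -> w i = w j -> i = j).

Definition avoids321 n (w : nat -> nat) : Prop :=
  forall i j k, i < j -> j < k -> k < n -> w k < w j -> w j < w i -> False.

Definition avoids1324 n (w : nat -> nat) : Prop :=
  forall i j k l, i < j -> j < k -> k < l -> l < n ->
    w i < w k -> w k < w j -> w j < w l -> False.

Definition fishburn_word n (w : nat -> nat) : Prop :=
  forall i j, i < j -> j < n -> i.+1 < n ->
    w j < w i -> w i < w i.+1 -> w i = (w j).+1 -> False.

Definition fish_word n (w : nat -> nat) : Prop :=
  [/\ fishburn_word n w, avoids321 n w & avoids1324 n w].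

Lemma fish_word_ext n (w g : nat -> nat) :
  (forall i, i < n -> w i = g i) -> fish_word n g -> fish_word n w.
Proof.
move=> e [Hf H3 H4]; split.
- move=> i j ij jn i1.
  rewrite (e i ltac:(lia)) (e j ltac:(lia)) (e i.+1 ltac:(lia)); exact: Hf.
- move=> i j k ij jk kn.
  rewrite (e i ltac:(lia)) (e j ltac:(lia)) (e k ltac:(lia)); exact: H3.
- move=> i j k l ij jk kl ln.
  rewrite (e i ltac:(lia)) (e j ltac:(lia)) (e k ltac:(lia)) (e l ltac:(lia)).
  exact: H4.
Qed.

Lemma perm_word_onto n (w : nat -> nat) :
  perm_word n w -> forall v, v < n -> exists2 i, i < n & w i = v.
Proof.
case=> Hr Hi v vn.
have uniq_img : uniq [seq w i | i <- iota 0 n].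
  by rewrite map_inj_in_uniq ?iota_uniq // => i j; rewrite !mem_iota; apply: Hi.
have sub_img : {subset [seq w i | i <- iota 0 n] <= iota 0 n}.
  by move=> x /mapP [i]; rewrite !mem_iota /= => /Hr ? ->.
have [_ img_full] := uniq_min_size uniq_img sub_img ltac:(by rewrite size_map).
have : v \in [seq w i | i <- iota 0 n] by rewrite img_full mem_iota.
by case/mapP => i; rewrite mem_iota /= => ? ->; exists i.
Qed.

Lemma increasing_gap (f : nat -> nat) lo hi :
  (forall i, lo <= i -> i.+1 < hi -> f i < f i.+1) ->
  forall i j, lo <= i -> i <= j -> j < hi -> f i + (j - i) <= f j.
Proof.
move=> inc i j loi; elim: j => [|j IH] ij jhi; first by have -> : i = 0 by [lia]; rewrite addn0.
case: (ltnP j i) => ji; first by have e : i = j.+1 by [lia]; rewrite e subnn addn0.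
by have := IH ji (ltnW jhi); have := inc j (leq_trans loi ji) jhi; lia.
Qed.

Lemma increasing_shift (f : nat -> nat) lo hi c :
  (forall i, lo <= i -> i.+1 < hi -> f i < f i.+1) -> lo < hi ->
  c <= f lo -> f hi.-1 <= c + (hi.-1 - lo) ->
  forall i, lo <= i -> i < hi -> f i = c + (i - lo).
Proof.
move=> inc lohi flo fhi i loi ihi.
have := increasing_gap inc (leqnn lo) loi ihi.
have := increasing_gap inc loi (ltac:(lia) : i <= hi.-1) (ltac:(lia) : hi.-1 < hi).
lia.
Qed.

Definition g1 n k i := if i < k then i else if i == k then n.-1 else i.-1.

Definition skip_first a j := if j == 0 then a else if j <= a then j.-1 else j.

Definition g2 n a k i :=
  if i < k then skip_first a i else if i == k then n.-1 else skip_first a i.-1.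

Definition g3 n a k i :=
  if i == 0 then a else if i <= k then i.-1
  else if i <= k + (n.-1 - a) then i - k + a else i - (n - a).

(* Proves a statement about a word G, quantified over positions, from a
   piecewise-linear description [spec] of G: every value G x is replaced by
   a fresh variable constrained by [spec x], and linear arithmetic concludes. *)
Ltac by_spec G spec :=
  repeat (hnf; match goal with |- forall _ : nat, _ => intro end);
  repeat match goal with |- context [G ?x] => have := spec x; move: (G x) => ? end;
  lia.

Definition fish_perm_word n (w : nat -> nat) := perm_word n w /\ fish_word n w.

Section FamilyI.
Variables n k : nat.
Hypothesis kn : k < n.

Lemma g1_spec x :
  (x < k /\ g1 n k x = x) \/ (x = k /\ g1 n k x + 1 = n) \/ (k < x /\ g1 n k x + 1 = x).
Proof. rewrite /g1; do ![case: ifPn => ?]; lia. Qed.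

Lemma g1_fish : fish_perm_word n (g1 n k).
Proof. by do !split; by_spec (g1 n k) g1_spec. Qed.

End FamilyI.

Section FamilyII.
Variables n a k : nat.
Hypothesis ha : 1 <= a <= n.-2.
Hypothesis hk : 2 <= k <= n.-1.

Lemma g2_spec x :
  (x = 0 /\ g2 n a k x = a) \/ (1 <= x /\ x < k /\ x <= a /\ g2 n a k x + 1 = x) \/
  (x < k /\ a < x /\ g2 n a k x = x) \/ (x = k /\ g2 n a k x + 1 = n) \/
  (k < x /\ x <= a + 1 /\ g2 n a k x + 2 = x) \/ (k < x /\ a + 1 < x /\ g2 n a k x + 1 = x).
Proof. rewrite /g2 /skip_first; do ![case: ifPn => ?]; lia. Qed.

Lemma g2_fish : fish_perm_word n (g2 n a k).
Proof. by do !split; by_spec (g2 n a k) g2_spec. Qed.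

End FamilyII.

Section FamilyIII.
Variables n a k : nat.
Hypothesis ha : 2 <= a <= n - 3.
Hypothesis hk : 1 <= k <= a.-1.

Lemma g3_spec x :
  (x = 0 /\ g3 n a k x = a) \/ (1 <= x /\ x <= k /\ g3 n a k x + 1 = x) \/
  (k < x /\ x + a <= k + n - 1 /\ g3 n a k x + k = x + a) \/
  (k + n - 1 < x + a /\ g3 n a k x + n = x + a).
Proof. rewrite /g3; do ![case: ifPn => ?]; lia. Qed.

Lemma g3_fish : fish_perm_word n (g3 n a k).
Proof. by do !split; by_spec (g3 n a k) g3_spec. Qed.

End FamilyIII.

Definition family_word n (w : nat -> nat) : Prop :=
  [\/ exists2 k, k < n & forall i, i < n -> w i = g1 n k i,
      exists a k, [/\ 1 <= a <= n.-2, 2 <= k <= n.-1 & forall i, i < n -> w i = g2 n a k i]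
    | exists a k, [/\ 2 <= a <= n - 3, 1 <= k <= a.-1 & forall i, i < n -> w i = g3 n a k i]].

Section Classification.
Variables (n : nat) (w : nat -> nat).
Hypothesis n3 : 3 <= n.
Hypothesis Hr : forall i, i < n -> w i < n.
Hypothesis Hi : forall i j, i < n -> j < n -> w i = w j -> i = j.
Hypothesis Hfish : fishburn_word n w.
Hypothesis H321 : avoids321 n w.
Hypothesis H1324 : avoids1324 n w.

Let Hs : forall v, v < n -> exists2 i, i < n & w i = v :=
  perm_word_onto (conj Hr Hi).

(* The value 0 sits at position 0 or 1: otherwise w 0 w 1 0 would contain
   a 321 or a Fishburn pattern ending at the position of (w 0) - 1. *)
Lemma zero_in_front : w 0 = 0 \/ w 1 = 0.
Proof.
have [p pn wp] := Hs (ltac:(lia) : 0 < n).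
case: (ltnP p 2) => hp.
  by have [e|e] : p = 0 \/ p = 1 by [lia]; subst p; [left | right].
exfalso.
have ne0 : w 0 <> 0 by move=> h; have := Hi (ltac:(lia) : 0 < n) pn (etrans h (esym wp)); lia.
have ne1 : w 1 <> 0 by move=> h; have := Hi (ltac:(lia) : 1 < n) pn (etrans h (esym wp)); lia.
case: (ltngtP (w 0) (w 1)) => h.
- have [q qn wq] : exists2 q, q < n & w q = (w 0).-1.
    by apply: Hs; have := Hr (ltac:(lia) : 0 < n); lia.
  have q0 : q != 0 by apply/eqP => q0; move: wq; rewrite q0; lia.
  by apply: (@Hfish 0 q); lia.
- by apply: (@H321 0 1 p); lia.
- by have := Hi (ltac:(lia) : 0 < n) (ltac:(lia) : 1 < n) h; lia.
Qed.

Section ZeroFirst.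
Hypothesis w00 : w 0 = 0.

Section FirstMoved.
Variable k : nat.
Hypothesis kn : k < n.
Hypothesis fixed : forall i, i < k -> w i = i.
Hypothesis moved : w k != k.

Lemma prefix_values i v : i < n -> v < k -> w i = v -> i = v.
Proof. by move=> iN vk h; apply: Hi; [| lia | rewrite (fixed vk)]. Qed.

Lemma moved_up : k < w k.
Proof.
case: (ltngtP (w k) k) => // h; last by move: moved; rewrite h eqxx.
by have := prefix_values kn h (erefl _); lia.
Qed.

Lemma moved_pos : 0 < k.
Proof. by rewrite lt0n; apply: contra moved => /eqP ->; rewrite w00. Qed.

(* The value k comes right after position k: if it came later, the entry
   at k+1 would form a 321 with k and the value k, or a Fishburn pattern. *)
Lemma next_value : w k.+1 = k.
Proof.
have wk := moved_up.
have [q qn wq] := Hs kn.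
have kq : k < q.
  case: (ltngtP q k) => // h; last by move: moved; rewrite -h wq h eqxx.
  by have := fixed h; lia.
case: (ltnP k.+1 q) => hq; last by have <- : q = k.+1 by lia.
exfalso.
have k1n : k.+1 < n by lia.
have above : k < w k.+1.
  case: (ltngtP (w k.+1) k) => // h; first by have := prefix_values k1n h (erefl _); lia.
  by have := Hi k1n qn (etrans h (esym wq)); lia.
case: (ltngtP (w k.+1) (w k)) => h.
- by apply: (@H321 k k.+1 q); lia.
- have [j jn wj] : exists2 j, j < n & w j = (w k).-1 by apply: Hs; have := Hr kn; lia.
  have kj : k < j.
    case: (ltngtP j k) => // h2; first by have := fixed h2; lia.
    by move: wj; rewrite h2; lia.
  by apply: (@Hfish k j); lia.
- by have := Hi k1n kn h; lia.
Qed.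

(* The moved entry is the maximum n-1, otherwise 0 k (w k) (n-1) is a 1324. *)
Lemma moved_is_max : w k = n.-1.
Proof.
have wk := moved_up; have k0 := moved_pos; have wk1 := next_value.
have := Hr kn; case: (ltnP (w k) n.-1) => h1 h2; last by lia.
exfalso.
have [r rn wr] : exists2 r, r < n & w r = n.-1 by apply: Hs; lia.
case: (ltnP k.+1 r) => hr; first by apply: (@H1324 0 k k.+1 r); lia.
case: (ltngtP r k) => h3.
- by have := fixed h3; lia.
- by have e : r = k.+1 by [lia]; move: wr; rewrite e wk1; lia.
- by move: wr; rewrite h3; lia.
Qed.

(* After position k+1 the word increases (a descent would be a 321 with the
   maximum at k) through the remaining values k+1 .. n-2. *)
Lemma tail_values i : k.+1 < i -> i < n -> w i = i.-1.
Proof.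
move=> ki iN.
have wkM := moved_is_max; have wk1 := next_value.
have inc : forall j, k.+2 <= j -> j.+1 < n -> w j < w j.+1.
  move=> j hj hj1.
  have jn : j < n by lia.
  case: (ltngtP (w j) (w j.+1)) => // h; last by have := Hi jn hj1 h; lia.
  have wjM : w j != n.-1.
    by apply/eqP => e; have := Hi jn kn (etrans e (esym wkM)); lia.
  by exfalso; apply: (@H321 k j j.+1); try lia; have := Hr jn; lia.
have k2n : k.+2 < n by lia.
have lowb : k.+1 <= w k.+2.
  case: (ltnP (w k.+2) k) => h1; first by have := prefix_values k2n h1 (erefl _); lia.
  case: (eqVneq (w k.+2) k) => h2; last by lia.
  by have := Hi k2n (ltac:(lia) : k.+1 < n) (etrans h2 (esym wk1)); lia.
have upb : w n.-1 <= n.-2.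
  have := Hr (ltac:(lia) : n.-1 < n); case: (eqVneq (w n.-1) n.-1) => e; last by lia.
  by have := Hi (ltac:(lia) : n.-1 < n) kn (etrans e (esym wkM)); lia.
by have := increasing_shift inc k2n lowb (ltac:(lia) : w n.-1 <= k.+1 + (n.-1 - k.+2)) ki iN; lia.
Qed.

Lemma first_moved_shape i : i < n -> w i = g1 n k i.
Proof.
move=> iN; have := g1_spec kn i.
case: (ltnP i k) => [ik | ki]; first by rewrite fixed //; lia.
case: (ltnP k.+1 i) => [k1i | ik1]; first by rewrite tail_values //; lia.
have [->|->] : i = k \/ i = k.+1 by lia.
- by rewrite moved_is_max; lia.
- by rewrite next_value; lia.
Qed.

End FirstMoved.

Lemma zero_first_family : exists2 k, k < n & forall i, i < n -> w i = g1 n k i.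
Proof.
case: (pickP (fun i : 'I_n => w i != i)) => [i0 /= hi0 | hnone]; last first.
  exists n.-1; first by lia.
  move=> i iN; have := hnone (Ordinal iN); rewrite /= => /negbFE/eqP ->.
  by have := g1_spec (ltac:(lia) : n.-1 < n) i; lia.
have ex : exists k, (k < n) && (w k != k) by exists i0; rewrite ltn_ord hi0.
case: (ex_minnP ex) => k /andP[kn moved] kmin.
have fixed : forall i, i < k -> w i = i.
  move=> i ik; have iN : i < n by lia.
  apply/eqP; apply: contraTT ik => h; rewrite -leqNgt; apply: kmin.
  by rewrite h iN.
by exists k => //; apply: first_moved_shape.
Qed.

End ZeroFirst.

Section OneSecond.
Hypothesis w10 : w 1 = 0.
Local Notation a := (w 0).

Lemma first_pos : 0 < a.
Proof.
case: (posnP a) => // h.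
by have := Hi (ltac:(lia) : 0 < n) (ltac:(lia) : 1 < n) (etrans h (esym w10)).
Qed.

Lemma others_not_first i : 0 < i -> i < n -> w i != a.
Proof. by move=> i0 iN; apply/eqP => h; have := Hi iN (ltac:(lia) : 0 < n) h; lia. Qed.

Lemma below_first_increasing i j :
  0 < i -> i < j -> j < n -> w i < a -> w j < a -> w i < w j.
Proof.
move=> i0 ij jn hi hj; case: (ltngtP (w i) (w j)) => // h.
- by exfalso; apply: (@H321 0 i j).
- by have := Hi (ltac:(lia) : i < n) jn h; lia.
Qed.

Lemma first_max_family : n.-1 <= a -> forall i, i < n -> w i = g1 n 0 i.
Proof.
move=> aM i iN.
have small : forall j, 0 < j -> j < n -> w j < a.
  by move=> j j0 jn; have := Hr jn; have := others_not_first j0 jn; lia.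
have inc : forall j, 1 <= j -> j.+1 < n -> w j < w j.+1.
  by move=> j j0 jn; apply: below_first_increasing => //; apply: small; lia.
have := g1_spec (ltac:(lia) : 0 < n) i; have aN := Hr (ltac:(lia) : 0 < n).
case: (posnP i) => [-> | i0]; first by lia.
have last_small := small n.-1 (ltac:(lia)) (ltac:(lia)).
have := increasing_shift inc (ltac:(lia) : 1 < n) (leq0n (w 1))
  (ltac:(lia) : w n.-1 <= 0 + (n.-1 - 1)) i0 iN.
lia.
Qed.

(* By induction on u: if u-1 precedes u, apply induction;
   if it follows u, the entry right after u together with the maximum n-1
   and the value 0 or a yields a 321, a 1324 or a Fishburn pattern. *)
Lemma above_first_chain u i j :
  w i = u -> i < j -> j < n -> a < w j -> w j < u -> u != n.-1 -> False.
Proof.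
elim/ltn_ind: u i j => u IH i j wi ij jn aj ju uM.
have iN : i < n by lia.
have uN : u < n by rewrite -wi; apply: Hr.
have [i' i'n wi'] : exists2 i', i' < n & w i' = u.-1 by apply: Hs; lia.
case: (ltngtP i' i) => h; last by move: wi'; rewrite h wi; lia.
- case: (eqVneq u.-1 (w j)) => e; first by have := Hi i'n jn (etrans wi' e); lia.
  by apply: (IH u.-1 _ i' j) => //; lia.
- have i1 : i.+1 < n by lia.
  have next_below : w i.+1 < u.
    case: (ltngtP (w i.+1) u) => // h2; first by exfalso; apply: (@Hfish i i'); lia.
    by have := Hi i1 iN (etrans h2 (esym wi)); lia.
  have i2 : 1 < i.
    case: (ltnP 1 i) => // hi.
    by have [e|e] : i = 0 \/ i = 1 by [lia]; move: wi; rewrite e ?w10; lia.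
  have [r rn wr] : exists2 r, r < n & w r = n.-1 by apply: Hs; lia.
  have ri : r != i by apply/eqP => e; move: wr; rewrite e wi; lia.
  have ri1 : r != i.+1 by apply/eqP => e; move: wr; rewrite e; lia.
  case: (ltnP r i) => hr; first by apply: (@H321 r i i.+1); lia.
  have := others_not_first (ltac:(lia) : 0 < i.+1) i1.
  case: (ltngtP (w i.+1) a) => // ta _.
  + have t0 : w i.+1 != 0.
      by apply/eqP => e; have := Hi i1 (ltac:(lia) : 1 < n) (etrans e (esym w10)); lia.
    by apply: (@H1324 1 i i.+1 r); lia.
  + by apply: (@H1324 0 i i.+1 r); lia.
Qed.

Lemma above_first_increasing i j :
  i < j -> j < n -> a < w j -> w i != n.-1 -> w i < w j.
Proof.
move=> ij jn aj iM; case: (ltngtP (w i) (w j)) => // h.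
- by exfalso; apply: (above_first_chain (erefl (w i)) ij).
- by have := Hi (ltac:(lia) : i < n) jn h; lia.
Qed.

Section BelowMax.
Hypothesis aM : a < n.-1.

Lemma max_position : exists2 r, 1 < r < n & w r = n.-1.
Proof.
have [r rn wr] : exists2 r, r < n & w r = n.-1 by apply: Hs; lia.
exists r => //; apply/andP; split => //.
case: (ltnP 1 r) => // hr.
by have [e|e] : r = 0 \/ r = 1 by [lia]; move: wr; rewrite e ?w10; lia.
Qed.

Section NoHighBeforeLow.
Hypothesis no_high_low :
  forall i j, i < j -> j < n -> a < w i -> w i < n.-1 -> w j < a -> False.
Variable r : nat.
Hypothesis hr : 1 < r < n.
Hypothesis wr : w r = n.-1.

Lemma not_max i : i < n -> i != r -> w i != n.-1.
Proof. by move=> iN ir; apply/eqP => e; have := Hi iN (ltac:(lia) : r < n) (etrans e (esym wr)); lia. Qed.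

Lemma increasing_off_max p q :
  0 < p -> p < q -> q < n -> p != r -> q != r -> w p < w q.
Proof.
move=> p0 pq qn pr qr.
have pn : p < n by lia.
have := others_not_first p0 pn; have := others_not_first (ltac:(lia) : 0 < q) qn.
have := not_max pn pr; have := not_max qn qr; have := Hr pn; have := Hr qn.
move=> hq hp hqM hpM hqa hpa.
case: (ltngtP (w p) a) => [pa | ap | pa]; last by rewrite pa eqxx in hpa.
- case: (ltngtP (w q) a) => [qa | aq | qa]; last by rewrite qa eqxx in hqa.
  + exact: below_first_increasing.
  + lia.
- case: (ltngtP (w q) a) => [qa | aq | qa]; last by rewrite qa eqxx in hqa.
  + by exfalso; apply: (no_high_low pq qn); lia.
  + exact: above_first_increasing.
Qed.

(* The word with its maximum deleted; on positions 1 .. n-2 it enumerates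
   [0, n-1) \ {a} in increasing order. *)
Definition delete_max i := if i < r then w i else w i.+1.

Lemma delete_max_increasing i : 1 <= i -> i.+1 < n.-1 -> delete_max i < delete_max i.+1.
Proof.
move=> i1 iN; rewrite /delete_max; case: (ltnP i.+1 r) => h1.
- by rewrite (ltnW h1); apply: increasing_off_max; lia.
- by case: (ltnP i r) => h2; apply: increasing_off_max; lia.
Qed.

Lemma delete_max_range i : 1 <= i -> i < n.-1 -> delete_max i < n.-1 /\ delete_max i != a.
Proof.
have entry j : 0 < j -> j < n -> j != r -> w j < n.-1 /\ w j != a.
  move=> j0 jn jr; have := Hr jn; have := not_max jn jr.
  by have := others_not_first j0 jn; split; lia.
by move=> i1 iN; rewrite /delete_max; case: (ltnP i r) => h; apply: entry; lia.
Qed.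

Lemma delete_max_values i : 1 <= i -> i < n.-1 -> delete_max i = skip_first a i.
Proof.
move=> i1 iN.
have inc := delete_max_increasing.
have d1 : delete_max 1 = 0 by rewrite /delete_max; case: ifPn => //; lia.
have lower j : 1 <= j -> j < n.-1 -> j.-1 <= delete_max j.
  by move=> j1 jn; have := increasing_gap inc (leqnn 1) j1 jn; lia.
have upper j : 1 <= j -> j < n.-1 -> delete_max j <= j.
  move=> j1 jn; have := delete_max_range (ltac:(lia) : 1 <= n.-2) (ltac:(lia) : n.-2 < n.-1).
  by have := increasing_gap inc j1 (ltac:(lia) : j <= n.-2) (ltac:(lia) : n.-2 < n.-1); lia.
have a1 := first_pos.
rewrite /skip_first; case: eqP => [|_]; first by lia.
case: (leqP i a) => ia.
- have [_ da] := delete_max_range (ltac:(lia) : 1 <= a) aM.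
  have := lower a (ltac:(lia)) aM; have := upper a (ltac:(lia)) aM.
  have := increasing_gap inc i1 ia aM; have := lower i i1 iN; lia.
- have [_ da] := delete_max_range (ltac:(lia) : 1 <= a.+1) (ltac:(lia) : a.+1 < n.-1).
  have := lower a.+1 (ltac:(lia)) (ltac:(lia)); have := upper a.+1 (ltac:(lia)) (ltac:(lia)).
  have := increasing_gap inc (ltac:(lia) : 1 <= a.+1) ia iN; have := upper i i1 iN; lia.
Qed.

Lemma no_high_low_family i : i < n -> w i = g2 n a r i.
Proof.
move=> iN; rewrite /g2; case: (ltnP i r) => h1.
- case: (posnP i) => [-> // | i0].
  by have := delete_max_values i0 (ltac:(lia) : i < n.-1); rewrite /delete_max h1.
- case: (eqVneq i r) => [-> // | h2].
  have := delete_max_values (ltac:(lia) : 1 <= i.-1) (ltac:(lia) : i.-1 < n.-1).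
  by rewrite /delete_max (_ : (i.-1 < r) = false) 1?(_ : i.-1.+1 = i) //; lia.
Qed.

End NoHighBeforeLow.

Section HighBeforeLow.
Hypothesis aM2 : a.+1 < n.-1.
Variables p e : nat.
Hypothesis wp : w p = a.+1.
Hypothesis p1 : 1 < p.
Hypothesis pe : p < e.
Hypothesis en : e < n.
Hypothesis ea : w e < a.
Hypothesis high_between : forall i, p < i -> i < e -> a < w i.

(* Once below a after p, the word stays below a: otherwise 0 (a+1) (w j) (w l)
   is a 1324. *)
Lemma low_after_low j l : p < j -> j < l -> l < n -> w j < a -> w l < a.
Proof.
move=> pj jl ln ja.
have := others_not_first (ltac:(lia) : 0 < l) ln; case: (ltngtP (w l) a) => // al _.
have la1 : w l != a.+1.
  by apply/eqP => eq; have := Hi ln (ltac:(lia) : p < n) (etrans eq (esym wp)); lia.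
have j0 : w j != 0.
  by apply/eqP => eq; have := Hi (ltac:(lia) : j < n) (ltac:(lia) : 1 < n) (etrans eq (esym w10)); lia.
by exfalso; apply: (@H1324 1 p j l); lia.
Qed.

Lemma low_from_e i : e <= i -> i < n -> w i < a.
Proof. by move=> ei iN; case: (eqVneq i e) => [-> // | ie]; apply: (@low_after_low e); lia. Qed.

Lemma high_block i : p <= i -> i < e -> a < w i.
Proof. by move=> pi ie; case: (eqVneq i p) => [-> | ip]; [lia | apply: high_between; lia]. Qed.

(* Before p everything (except the first entry) is below a: a larger entry
   would be the maximum (a 321 with a+1 and w e) or smaller than a+1. *)
Lemma low_before_p i : 0 < i -> i < p -> w i < a.
Proof.
move=> i0 ip; have iN : i < n by lia.
have := others_not_first i0 iN; case: (ltngtP (w i) a) => // h _.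
have ia1 : w i != a.+1.
  by apply/eqP => eq; have := Hi iN (ltac:(lia) : p < n) (etrans eq (esym wp)); lia.
case: (eqVneq (w i) n.-1) => iM; first by exfalso; apply: (@H321 i p e); lia.
by have := above_first_increasing ip (ltac:(lia) : p < n) (ltac:(lia) : a < w p) iM; lia.
Qed.

(* The block p .. e-1 increases: a descent from the maximum would be a 321
   with w e. *)
Lemma block_increasing i : p <= i -> i.+1 < e -> w i < w i.+1.
Proof.
move=> pi ie.
have hi1 := high_block (ltac:(lia) : p <= i.+1) ie.
case: (eqVneq (w i) n.-1) => iM; last by apply: above_first_increasing; lia.
have ne : w i.+1 <> w i.
  by move=> h; have := Hi (ltac:(lia) : i.+1 < n) (ltac:(lia) : i < n) h; lia.
have := Hr (ltac:(lia) : i.+1 < n).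
by move=> ?; exfalso; apply: (@H321 i i.+1 e); lia.
Qed.

(* The word without the block p .. e-1: on positions 1 .. it lists the
   entries below a, in increasing order. *)
Definition skip_block i := if i < p then w i else w (i + (e - p)).

Lemma skip_block_low i : 0 < i -> i < p + (n - e) -> skip_block i < a.
Proof.
move=> i0 iN; rewrite /skip_block; case: (ltnP i p) => h.
- exact: low_before_p.
- by apply: low_from_e; lia.
Qed.

Lemma skip_block_increasing i :
  1 <= i -> i.+1 < p + (n - e) -> skip_block i < skip_block i.+1.
Proof.
move=> i1 iN.
have := skip_block_low (ltac:(lia) : 0 < i) (ltac:(lia)).
have := skip_block_low (ltac:(lia) : 0 < i.+1) iN.
rewrite /skip_block; case: (ltnP i.+1 p) => h.
- rewrite (_ : i < p); last by lia.
  by move=> ha hb; apply: below_first_increasing => //; lia.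
- by case: (ltnP i p) => h2 ha hb; apply: below_first_increasing => //; lia.
Qed.

(* The maximum n-1 ends the block: it is neither before p nor after e-1,
   and inside the block it can only be followed by a larger entry. *)
Lemma block_end_max : w e.-1 = n.-1.
Proof.
have [r hr wr] := max_position.
have := Hr (ltac:(lia) : r < n).
case: (ltnP r p) => rp; first by have := low_before_p (ltac:(lia) : 0 < r) rp; lia.
case: (leqP e r) => er; first by have := low_from_e er (ltac:(lia) : r < n); lia.
case: (ltnP r.+1 e) => rr; last by have -> : e.-1 = r by lia.
by have := block_increasing rp rr; have := Hr (ltac:(lia) : r.+1 < n); lia.
Qed.

(* Counting: the block holds exactly the n-1-a values above a, so the
   positions outside it number a+1.  The block has at most n-1-a entries
   (it increases from a+1 up to n-1) and at least that many,
   since the a entries below a outside it increase from 0. *)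
Lemma block_length : p + (n - e) = a.+1.
Proof.
have block_gap := increasing_gap block_increasing (leqnn p)
  (ltac:(lia) : p <= e.-1) (ltac:(lia) : e.-1 < e).
rewrite wp block_end_max in block_gap.
have skip1 : skip_block 1 = 0 by rewrite /skip_block; case: ifPn => //; lia.
have := increasing_gap skip_block_increasing (leqnn 1)
  (ltac:(lia) : 1 <= (p + (n - e)).-1) (ltac:(lia) : (p + (n - e)).-1 < p + (n - e)).
have := skip_block_low (ltac:(lia) : 0 < (p + (n - e)).-1) (ltac:(lia)).
lia.
Qed.

Lemma block_values i : p <= i -> i < e -> w i = a.+1 + (i - p).
Proof.
have len := block_length; have wM := block_end_max.
apply: (increasing_shift block_increasing); lia.
Qed.

Lemma skip_block_values i : 0 < i -> i < a.+1 -> skip_block i = i.-1.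
Proof.
move=> i0 ia; have len := block_length.
have skip1 : skip_block 1 = 0 by rewrite /skip_block; case: ifPn => //; lia.
have lasta := skip_block_low (ltac:(lia) : 0 < a) (ltac:(lia)).
have := increasing_shift (f := skip_block) (lo := 1) (hi := a.+1) (c := 0)
  (fun j j1 jn => skip_block_increasing j1 (ltac:(lia))) (ltac:(lia)) (leq0n _)
  (ltac:(rewrite /=; lia)) i0 ia.
lia.
Qed.

Lemma high_low_family i : i < n -> w i = g3 n a p.-1 i.
Proof.
move=> iN; have len := block_length.
rewrite /g3; case: (posnP i) => [-> // | i0].
case: (ltnP i p) => hp.
- rewrite (_ : i <= p.-1); last by lia.
  by have := skip_block_values i0 (ltac:(lia)); rewrite /skip_block hp.
- rewrite (_ : (i <= p.-1) = false); last by lia.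
  case: (ltnP i e) => he.
  + rewrite (_ : i <= p.-1 + (n.-1 - a)); last by lia.
    rewrite block_values //; lia.
  + rewrite (_ : (i <= p.-1 + (n.-1 - a)) = false); last by lia.
    have := skip_block_values (i := i - (e - p)) (ltac:(lia)) (ltac:(lia)).
    rewrite /skip_block (_ : (i - (e - p) < p) = false); last by lia.
    by rewrite (_ : i - (e - p) + (e - p) = i); lia.
Qed.

End HighBeforeLow.

Lemma high_low_positions :
  (exists i j, [/\ i < j, j < n, a < w i, w i < n.-1 & w j < a]) ->
  exists p e, [/\ w p = a.+1, 1 < p, p < e, e < n & (w e < a) /\
                  forall i, p < i -> i < e -> a < w i].
Proof.
case=> x [y [xy yn ax xM ya]].
have xn : x < n by lia.
have [p pn wp] : exists2 p, p < n & w p = a.+1 by apply: Hs; lia.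
have p1 : 1 < p.
  case: (ltnP 1 p) => // hp.
  by have [eq|eq] : p = 0 \/ p = 1 by [lia]; move: wp; rewrite eq ?w10; lia.
have px : p <= x.
  case: (leqP p x) => // h.
  case: (eqVneq (w x) a.+1) => eq; first by have := Hi xn pn (etrans eq (esym wp)); lia.
  by have := above_first_increasing h pn (ltac:(lia) : a < w p) (ltac:(lia) : w x != n.-1); lia.
have ex : exists e, [&& p < e, e < n & w e < a] by exists y; rewrite ya yn andbT; lia.
case: (ex_minnP ex) => e /and3P [pe en ea] emin.
exists p, e; split => //; split => // i pi ie.
have iN : i < n by lia.
have := others_not_first (ltac:(lia) : 0 < i) iN.
case: (ltngtP (w i) a) => // h _.
by have := emin i (ltac:(rewrite h iN andbT; lia)); lia.
Qed.

End BelowMax.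

Lemma one_second_family :
  [\/ forall i, i < n -> w i = g1 n 0 i,
      exists b k, [/\ 1 <= b <= n.-2, 2 <= k <= n.-1 & forall i, i < n -> w i = g2 n b k i]
    | exists b k, [/\ 2 <= b <= n - 3, 1 <= k <= b.-1 & forall i, i < n -> w i = g3 n b k i]].
Proof.
have a0 := first_pos; have aN := Hr (ltac:(lia) : 0 < n).
case: (ltnP a n.-1) => aM; last by apply: Or31; apply: first_max_family.
have [r hr wr] := max_position aM.
case: (boolP [exists i : 'I_n, exists j : 'I_n,
   [&& i < j, a < w i, w i < n.-1 & w j < a]]) => hD; last first.
  apply: Or32; exists a, r; split; [lia | lia | apply: no_high_low_family => //].
  move=> i j ij jn h1 h2 h3; move/negP: hD; apply; apply/existsP.
  exists (Ordinal (ltac:(lia) : i < n)); apply/existsP; exists (Ordinal jn).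
  by rewrite /= ij h1 h2 h3.
have witness : exists i j, [/\ i < j, j < n, a < w i, w i < n.-1 & w j < a].
  case/existsP: hD => x /existsP [y /and4P [xy ax xM ya]].
  by exists x, y; split.
have aM2 : a.+1 < n.-1 by case: witness => x [y [_ _ ? ? _]]; lia.
have [p [e [wp p1 pe en [ea high]]]] := high_low_positions aM witness.
have len : p + (n - e) = a.+1 by apply: block_length.
apply: Or33; exists a, p.-1; split; [lia | lia | move=> i iN].
exact: (high_low_family aM aM2 wp p1 pe en ea high iN).
Qed.

End OneSecond.

Theorem classification : family_word n w.
Proof.
case: zero_in_front => [w00 | w10]; first by apply: Or31; exact: zero_first_family.
case: (one_second_family w10) => [h | h | h].
- by apply: Or31; exists 0; first lia.
- exact: Or32.
- exact: Or33.
Qed.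

End Classification.

Definition words_I n := [seq mkseq (g1 n k) n | k <- iota 0 n].
Definition words_II n :=
  flatten [seq [seq mkseq (g2 n a k) n | k <- iota 2 n.-2] | a <- iota 1 n.-2].
Definition words_III n :=
  flatten [seq [seq mkseq (g3 n a k) n | k <- iota 1 a.-1] | a <- iota 2 (n - 4)].
Definition fish_words n := words_I n ++ words_II n ++ words_III n.

Lemma mkseq_agree n (f g : nat -> nat) :
  (forall i, i < n -> f i = g i) -> mkseq f n = mkseq g n.
Proof.
move=> e; apply: (@eq_from_nth _ 0); rewrite ?size_mkseq // => i hi.
by rewrite !nth_mkseq ?e.
Qed.

Lemma agree_mkseq n (f g : nat -> nat) :
  mkseq f n = mkseq g n -> forall i, i < n -> f i = g i.
Proof. by move=> e i hi; rewrite -(nth_mkseq 0 f hi) -(nth_mkseq 0 g hi) e. Qed.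

Lemma family_word_mem n (w : nat -> nat) : family_word n w -> mkseq w n \in fish_words n.
Proof.
rewrite /fish_words !mem_cat.
case=> [[k kn /mkseq_agree ->] | [a [k [ha hk /mkseq_agree ->]]] | [a [k [ha hk /mkseq_agree ->]]]].
- by apply/orP; left; apply/mapP; exists k; rewrite // mem_iota; lia.
- apply/orP; right; apply/orP; left; apply/flatten_mapP; exists a; first by rewrite mem_iota; lia.
  by apply/mapP; exists k; rewrite // mem_iota; lia.
- apply/orP; right; apply/orP; right; apply/flatten_mapP; exists a; first by rewrite mem_iota; lia.
  by apply/mapP; exists k; rewrite // mem_iota; lia.
Qed.

Lemma fish_words_mem n x : x \in fish_words n -> exists2 g, x = mkseq g n & fish_perm_word n g.
Proof.
rewrite /fish_words !mem_cat => /or3P [].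
- case/mapP => k; rewrite mem_iota => hk ->.
  by exists (g1 n k) => //; apply: g1_fish; lia.
- case/flatten_mapP => a; rewrite mem_iota => ha /mapP [k]; rewrite mem_iota => hk ->.
  by exists (g2 n a k) => //; apply: g2_fish; lia.
- case/flatten_mapP => a; rewrite mem_iota => ha /mapP [k]; rewrite mem_iota => hk ->.
  by exists (g3 n a k) => //; apply: g3_fish; lia.
Qed.

(* Distinct parameters give distinct words: the entries at position 0 and
   at one well-chosen position already differ. *)
Section Separation.
Variable n : nat.

Lemma words_I_inj k k' : k < n -> k' < n -> mkseq (g1 n k) n = mkseq (g1 n k') n -> k = k'.
Proof.
move=> hk hk' /agree_mkseq e; have := e k hk.
by have := g1_spec hk k; have := g1_spec hk' k; lia.
Qed.

Lemma words_I_II k a k' : k < n -> 1 <= a <= n.-2 -> 2 <= k' <= n.-1 ->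
  mkseq (g1 n k) n <> mkseq (g2 n a k') n.
Proof.
move=> hk ha hk' /agree_mkseq e; have := e 0 (ltac:(lia)).
by have := g1_spec hk 0; have := g2_spec ha hk' 0; lia.
Qed.

Lemma words_I_III k a k' : k < n -> 2 <= a <= n - 3 -> 1 <= k' <= a.-1 ->
  mkseq (g1 n k) n <> mkseq (g3 n a k') n.
Proof.
move=> hk ha hk' /agree_mkseq e; have := e 0 (ltac:(lia)).
by have := g1_spec hk 0; have := g3_spec ha hk' 0; lia.
Qed.

Lemma words_II_inj a k a' k' :
  1 <= a <= n.-2 -> 2 <= k <= n.-1 -> 1 <= a' <= n.-2 -> 2 <= k' <= n.-1 ->
  mkseq (g2 n a k) n = mkseq (g2 n a' k') n -> a = a' /\ k = k'.
Proof.
move=> ha hk ha' hk' /agree_mkseq e; have := e 0 (ltac:(lia)); have := e k (ltac:(lia)).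
have := g2_spec ha hk 0; have := g2_spec ha' hk' 0.
by have := g2_spec ha hk k; have := g2_spec ha' hk' k; lia.
Qed.

Lemma words_II_III a k a' k' :
  1 <= a <= n.-2 -> 2 <= k <= n.-1 -> 2 <= a' <= n - 3 -> 1 <= k' <= a'.-1 ->
  mkseq (g2 n a k) n <> mkseq (g3 n a' k') n.
Proof.
move=> ha hk ha' hk' /agree_mkseq e; have := e 0 (ltac:(lia)); have := e n.-1 (ltac:(lia)).
have := g2_spec ha hk 0; have := g3_spec ha' hk' 0.
by have := g2_spec ha hk n.-1; have := g3_spec ha' hk' n.-1; lia.
Qed.

Lemma words_III_inj a k a' k' :
  2 <= a <= n - 3 -> 1 <= k <= a.-1 -> 2 <= a' <= n - 3 -> 1 <= k' <= a'.-1 ->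
  mkseq (g3 n a k) n = mkseq (g3 n a' k') n -> a = a' /\ k = k'.
Proof.
move=> ha hk ha' hk' /agree_mkseq e; have := e 0 (ltac:(lia)); have := e k.+1 (ltac:(lia)).
have := g3_spec ha hk 0; have := g3_spec ha' hk' 0.
by have := g3_spec ha hk k.+1; have := g3_spec ha' hk' k.+1; lia.
Qed.

Lemma uniq_flatten_map (S T : eqType) (F : S -> seq T) (s : seq S) :
  uniq s -> (forall a, a \in s -> uniq (F a)) ->
  (forall a b x, a \in s -> b \in s -> x \in F a -> x \in F b -> a = b) ->
  uniq (flatten [seq F a | a <- s]).
Proof.
elim: s => //= a s IH /andP [an us] Hu Hd.
have Hu' : forall b, b \in s -> uniq (F b).
  by move=> b bs; apply: Hu; rewrite inE bs orbT.
have Hd' : forall b c x, b \in s -> c \in s -> x \in F b -> x \in F c -> b = c.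
  by move=> b c x bs cs xb xc; apply: (Hd b c x); rewrite ?inE ?bs ?cs ?orbT.
rewrite cat_uniq Hu ?mem_head //= IH // andbT; apply/hasPn => x /flatten_mapP [b bs xb]; apply/negP => xa.
have bas : b \in a :: s by rewrite inE bs orbT.
by move: an; rewrite (Hd a b x (mem_head _ _) bas xa xb) bs.
Qed.

Lemma uniq_fish_words : uniq (fish_words n).
Proof.
rewrite /fish_words !cat_uniq; apply/and5P; split.
- rewrite /words_I map_inj_in_uniq ?iota_uniq // => k k'; rewrite !mem_iota => hk hk'.
  by apply: words_I_inj; lia.
- rewrite has_cat negb_or; apply/andP; split;
    apply/hasPn => x /flatten_mapP [a ha /mapP [k hk ->]];
    apply/negP => /mapP [k' hk' e]; move: ha hk hk'; rewrite !mem_iota => ha hk hk'.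
  + by apply: (@words_I_II k' a k) => //; lia.
  + by apply: (@words_I_III k' a k) => //; lia.
- apply: uniq_flatten_map; first exact: iota_uniq.
  + move=> a; rewrite mem_iota => ha; rewrite map_inj_in_uniq ?iota_uniq // => k k'.
    rewrite !mem_iota => hk hk' e.
    by have [] := @words_II_inj a k a k' ltac:(lia) ltac:(lia) ltac:(lia) ltac:(lia) e.
  + move=> a b x; rewrite !mem_iota => ha hb /mapP [k hk ->] /mapP [k' hk' e].
    move: hk hk'; rewrite !mem_iota => hk hk'.
    by have [] := @words_II_inj a k b k' ltac:(lia) ltac:(lia) ltac:(lia) ltac:(lia) e.
- apply/hasPn => x /flatten_mapP [a ha /mapP [k hk ->]];
    apply/negP => /flatten_mapP [a' ha' /mapP [k' hk' e]].
  move: ha hk ha' hk'; rewrite !mem_iota => ha hk ha' hk'.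
  by apply: (@words_II_III a' k' a k) => //; lia.
- apply: uniq_flatten_map; first exact: iota_uniq.
  + move=> a; rewrite mem_iota => ha; rewrite map_inj_in_uniq ?iota_uniq // => k k'.
    rewrite !mem_iota => hk hk' e.
    by have [] := @words_III_inj a k a k' ltac:(lia) ltac:(lia) ltac:(lia) ltac:(lia) e.
  + move=> a b x; rewrite !mem_iota => ha hb /mapP [k hk ->] /mapP [k' hk' e].
    move: hk hk'; rewrite !mem_iota => hk hk'.
    by have [] := @words_III_inj a k b k' ltac:(lia) ltac:(lia) ltac:(lia) ltac:(lia) e.
Qed.

End Separation.

Lemma sumn_const (T : Type) (c : nat) (s : seq T) : sumn [seq c | _ <- s] = c * size s.
Proof. by elim: s => /= [|x s ->]; lia. Qed.

Lemma sumn_iota_pred m : (sumn [seq a.-1 | a <- iota 2 m]).*2 = m * m.+1.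
Proof.
elim: m => // m IH.
rewrite (_ : iota 2 m.+1 = iota 2 m ++ [:: m.+2]); last first.
  by rewrite -(addn1 m) iotaD /=; congr (_ ++ [:: _]); lia.
by rewrite map_cat sumn_cat /= doubleD IH; lia.
Qed.

Lemma size_fish_words n :
  (size (fish_words n)).*2 = n.*2 + (n.-2 * n.-2).*2 + (n - 4) * (n - 3).
Proof.
rewrite /fish_words /words_I /words_II /words_III !size_cat size_map size_iota.
rewrite !size_flatten /shape -!map_comp.
rewrite (eq_map (_ : _ =1 fun _ => n.-2)); last by move=> a /=; rewrite size_map size_iota.
rewrite sumn_const size_iota.
rewrite (eq_map (_ : _ =1 fun a => a.-1)); last by move=> a /=; rewrite size_map size_iota.
rewrite !doubleD sumn_iota_pred.
case: (leqP 4 n) => h.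
- by rewrite (_ : (n - 4).+1 = n - 3); lia.
- by rewrite (_ : n - 4 = 0); lia.
Qed.

Definition word n (s : 'S_n) : nat -> nat := nth 0 (oneline s).

Section PermutationWords.
Variables (n : nat) (s : 'S_n).

Lemma wordE i (hi : i < n) : word s i = s (Ordinal hi).
Proof.
rewrite /word /oneline (nth_map (Ordinal hi)) ?size_enum_ord //.
by congr (nat_of_ord (s _)); apply/val_inj => /=; exact: nth_enum_ord.
Qed.

Lemma word_ord (i : 'I_n) : word s i = s i.
Proof. by case: i => i hi; rewrite wordE. Qed.

Lemma oneline_word : oneline s = mkseq (word s) n.
Proof.
have size_s : size (oneline s) = n by rewrite /oneline size_map size_enum_ord.
by apply: (@eq_from_nth _ 0); rewrite size_s ?size_mkseq // => i hi; rewrite nth_mkseq.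
Qed.

Lemma word_perm : perm_word n (word s).
Proof.
split=> [i hi | i j hi hj]; first by rewrite (wordE hi) ltn_ord.
by rewrite (wordE hi) (wordE hj) => /val_inj/perm_inj/(congr1 val).
Qed.

Lemma occurrenceP p (f : {ffun 'I_(size p) -> 'I_n}) :
  [forall a : 'I_(size p), forall b : 'I_(size p),
      ((a < b) ==> (f a < f b)) && ((s (f a) < s (f b)) == (nth 0 p a < nth 0 p b))] ->
  forall a b : 'I_(size p),
    (a < b -> f a < f b) /\ ((s (f a) < s (f b)) = (nth 0 p a < nth 0 p b)).
Proof.
move/forallP=> H a b; move/forallP: (H a) => /(_ b) /andP [/implyP h1 /eqP h2].
by split.
Qed.

Lemma avoids321P : avoids_pat s [:: 3; 2; 1] <-> avoids321 n (word s).
Proof.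
split.
- move=> /negP H i j k ij jk kn h1 h2; apply: H.
  have hi : i < n by lia.
  have hj : j < n by lia.
  apply/existsP; exists [ffun a : 'I_3 => nth (Ordinal hi) [:: Ordinal hi; Ordinal hj; Ordinal kn] a].
  move: h1 h2; rewrite (wordE hi) (wordE hj) (wordE kn) => h1 h2.
  apply/forallP => a; apply/forallP => b; rewrite !ffunE.
  by case: a => [[|[|[|//]]] ha]; case: b => [[|[|[|//]]] hb] /=; lia.
- move=> H; apply/negP => /existsP [f /occurrenceP Hf].
  pose o0 : 'I_3 := @Ordinal 3 0 isT.
  pose o1 : 'I_3 := @Ordinal 3 1 isT.
  pose o2 : 'I_3 := @Ordinal 3 2 isT.
  have [h01 e01] := Hf o0 o1; have [h12 e12] := Hf o1 o2.
  have ne x y : x != y -> s x != s y by apply: contra => /eqP /perm_inj ->.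
  apply: (H (f o0) (f o1) (f o2)); rewrite ?word_ord //.
  + exact: h01.
  + exact: h12.
  + rewrite ltn_neqAle leqNgt e12 /= andbT.
    by apply: ne; apply/eqP => e; have := h12 isT; rewrite e ltnn.
  + rewrite ltn_neqAle leqNgt e01 /= andbT.
    by apply: ne; apply/eqP => e; have := h01 isT; rewrite e ltnn.
Qed.

Lemma avoids1324P : avoids_pat s [:: 1; 3; 2; 4] <-> avoids1324 n (word s).
Proof.
split.
- move=> /negP H i j k l ij jk kl ln h1 h2 h3; apply: H.
  have hi : i < n by lia.
  have hj : j < n by lia.
  have hk : k < n by lia.
  apply/existsP.
  exists [ffun a : 'I_4 => nth (Ordinal hi) [:: Ordinal hi; Ordinal hj; Ordinal hk; Ordinal ln] a].
  move: h1 h2 h3; rewrite (wordE hi) (wordE hj) (wordE hk) (wordE ln) => h1 h2 h3.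
  apply/forallP => a; apply/forallP => b; rewrite !ffunE.
  by case: a => [[|[|[|[|//]]]] ha]; case: b => [[|[|[|[|//]]]] hb] /=; lia.
- move=> H; apply/negP => /existsP [f /occurrenceP Hf].
  pose o0 : 'I_4 := @Ordinal 4 0 isT.
  pose o1 : 'I_4 := @Ordinal 4 1 isT.
  pose o2 : 'I_4 := @Ordinal 4 2 isT.
  pose o3 : 'I_4 := @Ordinal 4 3 isT.
  have [h01 _] := Hf o0 o1; have [h12 _] := Hf o1 o2; have [h23 _] := Hf o2 o3.
  have [_ e02] := Hf o0 o2; have [_ e21] := Hf o2 o1; have [_ e13] := Hf o1 o3.
  apply: (H (f o0) (f o1) (f o2) (f o3)); rewrite ?word_ord ?e02 ?e21 ?e13 //.
  + exact: h01.
  + exact: h12.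
  + exact: h23.
Qed.

Lemma fishburnP : fishburn s <-> fishburn_word n (word s).
Proof.
split.
- move=> H i j ij jn i1; rewrite /word => a b c; have iN : i < n by lia.
  move/forallP: H => /(_ (Ordinal iN)) /forallP /(_ (Ordinal jn)) /=.
  by rewrite ij i1 a b c eqxx.
- move=> H; apply/forallP => i; apply/forallP => j; apply/negP.
  by case/and5P => a b c d /eqP e; exact: (H i j a (ltn_ord j) b c d e).
Qed.

Lemma mem_Fish : s \in Fish n [:: [:: 3; 2; 1]; [:: 1; 3; 2; 4]] <-> fish_word n (word s).
Proof.
rewrite inE /= andbT; split.
- by case/and3P => /fishburnP ? /avoids321P ? /avoids1324P ?.
- by case=> /fishburnP ? /avoids321P ? /avoids1324P ?; apply/and3P.
Qed.

End PermutationWords.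

Lemma oneline_inj n : injective (@oneline n).
Proof.
move=> s t e; apply/permP => i; apply/val_inj => /=.
by rewrite -(word_ord s i) -(word_ord t i) /word e.
Qed.

Lemma perm_of_word n (f : nat -> nat) : perm_word n f ->
  exists s : 'S_n, forall i, i < n -> word s i = f i.
Proof.
case=> hR hI.
pose F := [ffun i : 'I_n => Ordinal (hR i (ltn_ord i))].
have Finj : injective F.
  move=> i j; rewrite !ffunE => /(congr1 val) /= e.
  by apply/val_inj; exact: (hI _ _ (ltn_ord i) (ltn_ord j) e).
by exists (perm Finj) => i hi; rewrite (wordE _ hi) permE ffunE.
Qed.

Lemma card_Fish n : 3 <= n ->
  #|Fish n [:: [:: 3; 2; 1]; [:: 1; 3; 2; 4]]| = size (fish_words n).
Proof.
move=> n3; rewrite cardE -(size_map (@oneline n)); apply/perm_size/uniq_perm.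
- by rewrite map_inj_uniq ?enum_uniq //; exact: oneline_inj.
- exact: uniq_fish_words.
- move=> x; apply/mapP/idP.
  + case=> s; rewrite mem_enum => /mem_Fish [Hf H3 H4] ->.
    have [Hr Hi] := word_perm s.
    by rewrite oneline_word; apply/family_word_mem/classification.
  + case/fish_words_mem => g -> [g_perm g_fish].
    have [s hs] := perm_of_word g_perm.
    exists s; last by rewrite oneline_word; apply: mkseq_agree => i hi; rewrite hs.
    by rewrite mem_enum; apply/mem_Fish; apply: fish_word_ext hs g_fish.
Qed.

Unset Implicit Arguments.
Import GRing.Theory Num.Theory.
Local Open Scope ring_scope.

Theorem mainTheorem8 (n : nat) (hn : (3 <= n)%N) :
  (#|Fish n [:: [:: 3; 2; 1]; [:: 1; 3; 2; 4]]%N|%:R : rat)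
  = 3%:R / 2%:R * n%:R ^+ 2 - 13%:R / 2%:R * n%:R + 10%:R.
Proof.
rewrite card_Fish //; have count := size_fish_words n.
set N := size (fish_words n) in count *.
have count_nat : (N.*2 + 13 * n = 3 * (n * n) + 20)%N by rewrite count; nia.
have count_rat : ((N.*2 + 13 * n)%:R : rat) = (3 * (n * n) + 20)%:R by rewrite count_nat.
rewrite -mul2n !natrD !natrM in count_rat.
rewrite expr2; lra.
Qed.
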